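(* Let $G=(V,E)$ be an almost tree (2). If $X,Y\subseteq V$ are such that $\mathbf v(X)$ and $\mathbf v(Y)$ are distinct and adjacent vertices of $\mathrm{CUT}(G)$, then $|\delta(X\triangle Y)|\le 3$.
   Context: For an undirected graph $G=(V,E)$ and $S\subseteq V$, $\delta(S)\subseteq E$ denotes the set of edges with exactly one endpoint in $S$, and $\mathbf v(S)\in\{0,1\}^{E}$ is its incidence vector ($v(S)_e=1$ iff $e\in\delta(S)$). The cut polytope is $\mathrm{CUT}(G)=\operatorname{conv}\{\mathbf v(S):S\subseteq V\}\subset\mathbb R^{E}$; adjacency of vertices means they are joined by a one-dimensional face. $X\triangle Y$ denotes symmetric difference. A connected graph is an almost tree ($k$) if every biconnected component (maximal subgraph that remains connected after removal of any single vertex) has at most $k$ edges not belonging to a spanning tree of that component. *)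

From HB Require Import structures.
From mathcomp Require Import all_boot all_order all_algebra.
From mathcomp Require Import reals.
Set Implicit Arguments. Unset Strict Implicit. Unset Printing Implicit Defensive.
Import Order.TTheory GRing.Theory Num.Theory.
Local Open Scope ring_scope.

Section CutPolytope.
Variable V : finType.
Variable adj : rel V.

Definition simple_graph : Prop := symmetric adj /\ irreflexive adj.

Definition edges : {set {set V}} :=
  [set A : {set V} | (#|A| == 2)%N &&
     [forall x in A, forall y in A, (x != y) ==> adj x y]].

Definition iedges (B : {set V}) : {set {set V}} := [set A in edges | A \subset B].

(* The graph (B, F) is connected (F is assumed to consist of edges inside B). *)
Definition connected_on (B : {set V}) (F : {set {set V}}) : bool :=
  [forall x in B, forall y in B, connect (fun u w => [set u; w] \in F) x y].

Definition connected_graph : bool := connected_on setT edges.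

Definition biconnected (B : {set V}) : bool :=
  connected_on B (iedges B) &&
  [forall v in B, connected_on (B :\ v) (iedges (B :\ v))].

Definition block (B : {set V}) : bool := maxset biconnected B.

Definition spanning_tree (B : {set V}) (T : {set {set V}}) : bool :=
  [&& T \subset iedges B, connected_on B T &
      [forall f in T, ~~ connected_on B (T :\ f)]].

Definition almost_tree (k : nat) : Prop :=
  connected_graph /\
  forall B : {set V}, block B ->
    exists T : {set {set V}}, spanning_tree B T /\ (#|iedges B :\: T| <= k)%N.

Definition cut (S : {set V}) : {set {set V}} :=
  [set A in edges | #|A :&: S| == 1%N].

Definition symdiff (X Y : {set V}) : {set V} := (X :\: Y) :|: (Y :\: X).

Variable R : realType.

(* Points of R^E are represented by functions {set V} -> R, only their
   values on edges matter. *)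
Definition cutvec (S : {set V}) : {set V} -> R :=
  fun A => if A \in cut S then 1 else 0.

Definition eq_on_E (x y : {set V} -> R) : Prop := forall A, A \in edges -> x A = y A.

Definition dotE (c x : {set V} -> R) : R := \sum_(A in edges) c A * x A.

Definition in_CUT (x : {set V} -> R) : Prop :=
  exists lam : {set V} -> R,
    (forall S, 0 <= lam S) /\ \sum_(S : {set V}) lam S = 1 /\
    eq_on_E x (fun A => \sum_(S : {set V}) lam S * cutvec S A).

Definition in_segment (X Y : {set V}) (x : {set V} -> R) : Prop :=
  exists t : R, 0 <= t <= 1 /\
    eq_on_E x (fun A => (1 - t) * cutvec X A + t * cutvec Y A).

(* v(X) and v(Y) are distinct and joined by a one-dimensional face of CUT(G):
   there is a valid inequality c.x <= d whose face is exactly the segment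
   [v(X), v(Y)]. *)
Definition cut_adjacent (X Y : {set V}) : Prop :=
  cut X != cut Y /\
  exists (c : {set V} -> R) (d : R),
    (forall x, in_CUT x -> dotE c x <= d) /\
    (forall x, (in_CUT x /\ dotE c x = d) <-> in_segment X Y x).

End CutPolytope.

(* Adjacency of v(X) and v(Y) makes S = X△Y a bond: if δ(Z) ⊆ δ(S), the midpoint of the
   edge [v(X), v(Y)] is also the midpoint of v(X△Z) and v(Y△Z), which therefore lie on that
   edge, and this forces δ(Z) = ∅ or δ(Z) = δ(S).  In a connected graph both shores of a bond
   induce connected subgraphs, so for a fixed e1 ∈ δ(S) and every other f ∈ δ(S) there is a
   cycle through e1 and f that meets δ(S) in exactly these two edges.  All these cycles
   contain e1, hence lie in a common block B.  The sums mod 2 of subfamilies of them are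
   pairwise distinct and meet every cut evenly; as a nonempty subset of a spanning tree T
   always meets some cut oddly, such a set is determined by its edges outside T.  Hence
   2^(|δ(S)| - 1) <= 2^k in an almost tree (k), i.e. |δ(S)| <= k + 1. *)

From HB Require Import structures.
From mathcomp Require Import all_boot all_order all_algebra.
From mathcomp Require Import reals.
From mathcomp.algebra_tactics Require Import ring lra.
Import Order.TTheory GRing.Theory Num.Theory.
Set Implicit Arguments. Unset Strict Implicit. Unset Printing Implicit Defensive.

Lemma in_symdiff (T : finType) (A B : {set T}) x :
  (x \in symdiff A B) = (x \in A) (+) (x \in B).
Proof. by rewrite !inE; case: (x \in A); case: (x \in B). Qed.

Lemma odd_card_setI (T : finType) (A B : {set T}) :
  odd #|A :&: B| = \big[addb/false]_(x in B) (x \in A).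
Proof.
rewrite -sum1_card (eq_bigl (fun x => (x \in B) && (x \in A))); last first.
  by move=> x; rewrite inE andbC.
rewrite big_mkcondr (big_morph odd oddD (erefl : odd 0 = false)).
by apply: eq_bigr => x _; case: (x \in A).
Qed.

Lemma odd_card_symdiffI (T : finType) (A B C : {set T}) :
  odd #|symdiff A B :&: C| = odd #|A :&: C| (+) odd #|B :&: C|.
Proof.
rewrite !odd_card_setI -big_split /=.
by apply: eq_bigr => x _; rewrite in_symdiff.
Qed.

Lemma odd_card_set1I (T : finType) (a : T) (C : {set T}) :
  odd #|[set a] :&: C| = (a \in C).
Proof. by rewrite setIC odd_card_setI big_set1. Qed.

Section Graph.
Variable V : finType.
Variable adj : rel V.
Hypothesis adjC : symmetric adj.
Hypothesis adj_irr : irreflexive adj.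
Local Notation edges := (edges adj).
Local Notation iedges := (iedges adj).
Local Notation cut := (cut adj).
Local Notation biconnected := (biconnected adj).

Definition edge_rel (F : {set {set V}}) : rel V := fun u w => [set u; w] \in F.

Lemma edge_relC F : symmetric (edge_rel F).
Proof. by move=> u w; rewrite /edge_rel setUC. Qed.

Lemma connect_edge_relC F x y :
  connect (edge_rel F) x y = connect (edge_rel F) y x.
Proof. exact: (sym_connect_sym (@edge_relC F)). Qed.

Lemma adj_neq x y : adj x y -> x != y.
Proof. by apply: contraTneq => ->; rewrite adj_irr. Qed.

Lemma edges2 x y : adj x y -> [set x; y] \in edges.
Proof.
move=> xy; rewrite inE cards2 adj_neq //=; apply/forall_inP => a.
rewrite !inE => /orP[]/eqP->; apply/forall_inP => b;
  rewrite !inE => /orP[]/eqP->; rewrite ?eqxx //; apply/implyP => _;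
  by rewrite // adjC.
Qed.

Lemma edgesP A : A \in edges -> exists x y, adj x y /\ A = [set x; y].
Proof.
rewrite inE => /andP[/cards2P [x [y [xy ->]]] /forall_inP H]; exists x, y.
by have /forall_inP/(_ y (set22 x y)) := H x (set21 x y); rewrite xy.
Qed.

Lemma edges2_adj u w : [set u; w] \in edges -> adj u w.
Proof.
rewrite inE => /andP[c2 /forall_inP H]; rewrite cards2 in c2.
have uw : u != w by move: c2; case: (u != w).
by have /forall_inP/(_ w (set22 u w)) := H u (set21 u w); rewrite uw.
Qed.

Lemma cut2 x y U : adj x y -> ([set x; y] \in cut U) = (x \in U) (+) (y \in U).
Proof.
move=> xy; rewrite inE edges2 //= -sum1_card.
rewrite (eq_bigl (fun z => (z \in [set x; y]) && (z \in U))); last first.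
  by move=> z; rewrite inE.
rewrite big_mkcondr big_setU1 /= ?inE ?adj_neq // big_set1.
by case: (x \in U); case: (y \in U).
Qed.

Lemma iedges2 x y B : adj x y -> ([set x; y] \in iedges B) = (x \in B) && (y \in B).
Proof. by move=> xy; rewrite inE edges2 // subUset !sub1set. Qed.

Lemma cut_edges A U : A \in cut U -> A \in edges.
Proof. by rewrite inE => /andP[]. Qed.

Lemma iedges_edges B : iedges B \subset edges.
Proof. by apply/subsetP => A; rewrite inE => /andP[]. Qed.

Lemma iedgesS (B B' : {set V}) : B \subset B' -> iedges B \subset iedges B'.
Proof.
move=> sBB'; apply/subsetP => A; rewrite !inE => /andP[-> sAB] /=.
exact: subset_trans sAB sBB'.
Qed.

Lemma iedges_cut A (S : {set V}) : A \in iedges S -> A \notin cut S.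
Proof.
move=> SA; have /edgesP [u [w [uw eA]]] := subsetP (iedges_edges S) _ SA.
by move: SA; rewrite eA iedges2 // cut2 // => /andP[-> ->].
Qed.

Lemma cut_symdiff X Y A : A \in edges ->
  (A \in cut (symdiff X Y)) = (A \in cut X) (+) (A \in cut Y).
Proof.
move=> /edgesP [x [y [xy ->]]]; rewrite !cut2 // !in_symdiff.
by case: (x \in X); case: (y \in X); case: (x \in Y); case: (y \in Y).
Qed.

Lemma cutC U : cut (~: U) = cut U.
Proof.
apply/setP => A; case: (boolP (A \in edges)) => [/edgesP [x [y [xy ->]]]|nA].
  by rewrite !cut2 // !inE; case: (x \in U); case: (y \in U).
by apply/idP/idP => /cut_edges; rewrite (negbTE nA).
Qed.

Lemma cut_ends (S : {set V}) e : e \in cut S ->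
  exists s t, [/\ s \in S, t \notin S, adj s t & e = [set s; t]].
Proof.
move=> eS; have /edgesP [u [w [uw eA]]] := cut_edges eS.
move: eS; rewrite eA cut2 //; case uS: (u \in S); case wS: (w \in S) => //= _.
  by exists u, w; rewrite uS wS.
by exists w, u; rewrite uS wS adjC setUC.
Qed.

Definition component (F : {set {set V}}) x : {set V} :=
  [set z | connect (edge_rel F) x z].

Lemma component_id (F : {set {set V}}) x : x \in component F x.
Proof. by rewrite inE connect0. Qed.

Lemma component_cut (F : {set {set V}}) x A :
  F \subset edges -> A \in F -> A \notin cut (component F x).
Proof.
move=> FE AF; have /edgesP [u [w [uw eA]]] := subsetP FE _ AF.
have Fuw : edge_rel F u w by rewrite /edge_rel -eA.
rewrite eA cut2 // !inE; apply/negP.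
case cu: (connect _ x u); case cw: (connect _ x w) => //= _.
  by rewrite (connect_trans cu (connect1 Fuw)) in cw.
have Fwu : edge_rel F w u by rewrite edge_relC.
by rewrite (connect_trans cw (connect1 Fwu)) in cu.
Qed.

Lemma connect_cut_closed (F : {set {set V}}) (U : {set V}) x y :
  F \subset edges -> {in F, forall A, A \notin cut U} ->
  x \in U -> connect (edge_rel F) x y -> y \in U.
Proof.
move=> FE FU xU /closed_connect <- // u w Fuw.
have uw := edges2_adj (subsetP FE _ Fuw).
by have := FU _ Fuw; rewrite cut2 //; case: (u \in U); case: (w \in U).
Qed.

Definition cut_even (D : {set {set V}}) : Prop :=
  forall U, ~~ odd #|D :&: cut U|.

Lemma spanning_tree_cut_even (B : {set V}) (T D : {set {set V}}) :
  spanning_tree adj B T -> D \subset T -> cut_even D -> D = set0.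
Proof.
case/and3P => sTB connT minT sDT evenD; apply/eqP/negPn/negP => /set0Pn [f fD].
have fT := subsetP sDT f fD.
have TE : T \subset edges := subset_trans sTB (iedges_edges B).
have /forall_inPn [x xB /forall_inPn [y yB nxy]] := forall_inP minT f fT.
pose U := component (T :\ f) x.
have TfU : {in T :\ f, forall A, A \notin cut U}.
  by move=> A; apply: component_cut; apply: subset_trans TE; apply: subsetDl.
have fU : f \in cut U.
  apply: contraT => nfU.
  have TU : {in T, forall A, A \notin cut U}.
    by move=> A AT; case: (eqVneq A f) => [-> //|Af]; apply: TfU; rewrite !inE Af.
  have Txy : connect (edge_rel T) x y.
    by move/forall_inP: connT => /(_ x xB)/forall_inP/(_ y yB).
  by have := connect_cut_closed TE TU (component_id _ _) Txy; rewrite inE (negbTE nxy).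
have DU : D :&: cut U = [set f].
  apply/setP => A; rewrite in_setI in_set1.
  case: (eqVneq A f) => [->|Af]; first by rewrite fD fU.
  case AD: (A \in D) => //=; apply/negbTE/TfU.
  by rewrite !inE Af (subsetP sDT).
by have := evenD U; rewrite DU cards1.
Qed.

Lemma cut_even_symdiff (D D' : {set {set V}}) :
  cut_even D -> cut_even D' -> cut_even (symdiff D D').
Proof.
move=> evenD evenD' U; rewrite odd_card_symdiffI.
by move: (evenD U) (evenD' U); do 2!case: odd.
Qed.

Lemma connected_on_hub (W : {set V}) (F : {set {set V}}) h :
  (forall y, y \in W -> connect (edge_rel F) h y) -> connected_on W F.
Proof.
move=> hubW; apply/forall_inP => a aW; apply/forall_inP => b bW.
by apply: (@connect_trans _ _ h); [rewrite connect_edge_relC|]; apply: hubW.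
Qed.

Lemma connect_iedgesS (W W' : {set V}) u w : W \subset W' ->
  connect (edge_rel (iedges W)) u w -> connect (edge_rel (iedges W')) u w.
Proof.
by move=> sWW'; apply: connect_sub => a b Wab; apply/connect1/(subsetP (iedgesS sWW')).
Qed.

Lemma connected_on_cover (W : {set V}) h :
  (forall y, y \in W -> exists2 W' : {set V}, W' \subset W &
     [&& connected_on W' (iedges W'), h \in W' & y \in W']) ->
  connected_on W (iedges W).
Proof.
move=> coverW; apply: (connected_on_hub (h := h)) => y.
case/coverW => W' sW'W /and3P[cW' hW' yW']; apply: connect_iedgesS sW'W _.
by move/forall_inP: cW' => /(_ h hW')/forall_inP/(_ y yW').
Qed.

Lemma biconnected_setD1 (W : {set V}) v :
  biconnected W -> connected_on (W :\ v) (iedges (W :\ v)).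
Proof.
case/andP => cW /forall_inP cWv; have [/cWv //|vW] := boolP (v \in W).
by rewrite (setDidPl _) // disjoint_sym disjoints1.
Qed.

Lemma biconnected_bigcup (I : finType) (P : {set I}) (W : I -> {set V}) x y :
  x != y -> (forall i, i \in P -> [&& biconnected (W i), x \in W i & y \in W i]) ->
  biconnected (\bigcup_(i in P) W i).
Proof.
move=> xy bW; apply/andP; split.
  apply: (connected_on_cover (h := x)) => z /bigcupP [i iP zW].
  have /and3P[/andP[cW _] xW _] := bW i iP.
  by exists (W i); [exact: bigcup_sup | rewrite cW xW zW].
apply/forall_inP => v _; pose h := if v == x then y else x.
have hv : h != v by rewrite /h; case: (eqVneq v x) => [->|]; rewrite // eq_sym.
apply: (connected_on_cover (h := h)) => z /setD1P [zv /bigcupP [i iP zW]].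
have /and3P[bWi xW yW] := bW i iP; exists (W i :\ v); first exact/setSD/bigcup_sup.
by rewrite biconnected_setD1 // !in_setD1 zv zW hv /h; case: ifP; rewrite ?xW ?yW.
Qed.

Fixpoint walk_edges (x : V) (p : seq V) : {set {set V}} :=
  if p is y :: p' then symdiff [set [set x; y]] (walk_edges y p') else set0.

Lemma walk_edges_cat x p q :
  walk_edges x (p ++ q) = symdiff (walk_edges x p) (walk_edges (last x p) q).
Proof.
elim: p x => [|y p IH] x /=; first by apply/setP => A; rewrite in_symdiff inE.
by rewrite IH; apply/setP => A; rewrite !in_symdiff addbA.
Qed.

Lemma odd_walk_edges_cut U x p : path adj x p ->
  odd #|walk_edges x p :&: cut U| = (x \in U) (+) (last x p \in U).
Proof.
elim: p x => [|y p IH] x /=; first by rewrite set0I cards0 addbb.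
case/andP => xy yp; rewrite odd_card_symdiffI odd_card_set1I IH // cut2 //.
by rewrite addbA -(addbA (x \in U)) addbb addbF.
Qed.

Lemma walk_edges_cut_even x p :
  path adj x p -> last x p = x -> cut_even (walk_edges x p).
Proof. by move=> xp px U; rewrite odd_walk_edges_cut // px addbb. Qed.

Lemma walk_edges_sub (W : {set V}) x p : path adj x p -> x \in W -> {subset p <= W} ->
  walk_edges x p \subset iedges W.
Proof.
elim: p x => [|y p IH] x /=; first by rewrite sub0set.
move=> /andP[xy yp] xW pW; have yW := pW y (mem_head _ _).
apply/subsetP => A; rewrite in_symdiff in_set1; case: eqP => [-> _|_ /= Ap].
  by rewrite iedges2 // xW yW.
by apply: subsetP (IH y yp yW _) _ Ap => z zp; apply: pW; rewrite inE zp orbT.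
Qed.

Lemma path_iedges (S : {set V}) x p : path (edge_rel (iedges S)) x p -> x \in S ->
  path adj x p && all (mem S) p.
Proof.
elim: p x => [|y p IH] x //= /andP[xy yp] xS.
have := xy; rewrite /edge_rel inE => /andP[/edges2_adj -> /=].
rewrite subUset !sub1set xS /= => yS; rewrite yS; exact: IH.
Qed.

Lemma connect_path_iedges (W : {set V}) h p : path adj h p -> {subset h :: p <= W} ->
  {in h :: p, forall y, connect (edge_rel (iedges W)) h y}.
Proof.
elim: p h => [|z p IH] h hp hpW y; first by rewrite mem_seq1 => /eqP ->.
rewrite in_cons => /predU1P [->|yzp] //; case/andP: hp => hz zp.
apply: (@connect_trans _ _ z).
  by apply: connect1; rewrite /edge_rel iedges2 // !hpW // !inE eqxx ?orbT.
by apply: IH yzp => // u uzp; apply: hpW; rewrite inE uzp orbT.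
Qed.

Lemma connected_on_path h p : path adj h p ->
  connected_on [set y in h :: p] (iedges [set y in h :: p]).
Proof.
move=> hp; apply: (connected_on_hub (h := h)) => y; rewrite inE => yhp.
by apply: (connect_path_iedges hp) => // z zhp; rewrite inE.
Qed.

Lemma connected_on_nil (F : {set {set V}}) : connected_on [set y in [::]] F.
Proof. by apply/forall_inP => a; rewrite inE. Qed.

Lemma biconnected_cycle x w : path adj x w -> last x w = x -> uniq w ->
  biconnected [set y in w].
Proof.
move=> xw wx uw; apply/andP; split.
  case: w xw {wx uw} => [|y w] /=; first by move=> _; apply: connected_on_nil.
  by case/andP => _; apply: connected_on_path.
apply/forall_inP => v; rewrite inE => vw; case/splitPr: vw xw wx uw => w1 w2 xw wx uw.
have -> : [set y in w1 ++ v :: w2] :\ v = [set y in w2 ++ w1].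
  move: uw; rewrite cat_uniq /= => /and4P[_ /norP[vw1 _] vw2 _].
  apply/setP => z; rewrite !inE !mem_cat inE orbC.
  by case: (eqVneq z v) => [->|]; rewrite ?(negbTE vw1) ?(negbTE vw2).
move: xw wx; rewrite cat_path last_cat => /andP[xw1 /= /andP[_ vw2]].
case: w2 vw2 {uw} => [|z w2] /= => [_ v_x|/andP[_ zw2] w2x].
  case: w1 xw1 {v_x} => [|y w1] /=; first by move=> _; apply: connected_on_nil.
  by case/andP => _; apply: connected_on_path.
by apply: connected_on_path; rewrite cat_path zw2 w2x.
Qed.

Definition bond (S : {set V}) : Prop :=
  cut S != set0 /\
  forall T, cut T \subset cut S -> cut T != set0 -> cut T = cut S.

Lemma bondC S : bond S -> bond (~: S).
Proof. by rewrite /bond cutC. Qed.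

Lemma component_sub (S : {set V}) x : x \in S -> component (iedges S) x \subset S.
Proof.
move=> xS; apply/subsetP => z; rewrite inE.
by apply: connect_cut_closed (iedges_edges S) _ xS => A; apply: iedges_cut.
Qed.

Lemma cut_component_sub (S : {set V}) x : x \in S ->
  cut (component (iedges S) x) \subset cut S.
Proof.
move=> xS; apply/subsetP => A AK; have [u [w [uK wK uw eA]]] := cut_ends AK.
have uS := subsetP (component_sub xS) _ uK.
rewrite eA cut2 // uS /=; apply: contraTN AK => wS.
by rewrite eA component_cut ?iedges_edges // iedges2 // uS wS.
Qed.

Lemma bond_connected_on (S : {set V}) :
  connected_graph adj -> bond S -> connected_on S (iedges S).
Proof.
move=> connG [/set0Pn [e eS] minS]; have [s [t [sS tS st ee]]] := cut_ends eS.
apply: (connected_on_hub (h := s)) => a aS; rewrite connect_edge_relC.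
pose K := component (iedges S) a.
have tK : t \notin K by apply: contra tS; apply/subsetP/component_sub.
have K0 : cut K != set0.
  apply: contraNneq tK => K0; apply: (connect_cut_closed (subxx _) _ (component_id _ a)).
    by move=> A _; rewrite K0 inE.
  by move/forall_inP: connG => /(_ a (in_setT a))/forall_inP/(_ t (in_setT t)).
have := eS; rewrite ee -(minS K (cut_component_sub aS) K0) cut2 //.
by rewrite (negbTE tK) addbF inE.
Qed.

Lemma cycle_through (S : {set V}) e1 e :
  connected_on S (iedges S) -> connected_on (~: S) (iedges (~: S)) ->
  e1 \in cut S -> e \in cut S ->
  exists W D, [/\ biconnected W, e1 \subset W, cut_even D, D \subset iedges W &
    {in cut S, forall f, (f \in D) = (f == e1) (+) (f == e)}].
Proof.
move=> cS cC e1S eS.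
have [s1 [t1 [s1S t1S st1 ->]]] := cut_ends e1S.
have [s [t [sS tS st ->]]] := cut_ends eS.
have t1C : t1 \in ~: S by rewrite inE.
have tC : t \in ~: S by rewrite inE.
have : connect (edge_rel (iedges S)) s1 s.
  by move/forall_inP: cS => /(_ s1 s1S)/forall_inP/(_ s sS).
case/connectP => p0 /shortenP [p Sp up _] ps {p0}.
have : connect (edge_rel (iedges (~: S))) t t1.
  by move/forall_inP: cC => /(_ t tC)/forall_inP/(_ t1 t1C).
case/connectP => q0 /shortenP [q Cq uq _] qt1 {q0}.
have /andP[s1p /allP pS] := path_iedges Sp s1S.
have /andP[tq /allP qC] := path_iedges Cq tC.
have pS' z : z \in s1 :: p -> z \in S by rewrite in_cons => /predU1P [->|/pS].
have qC' z : z \in t :: q -> z \notin S.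
  by rewrite in_cons => /predU1P [->|/qC]; rewrite ?inE.
pose w := rcons (p ++ t :: q) s1.
have s1w : path adj s1 w.
  by rewrite rcons_path cat_path s1p -ps /= st tq last_cat /= -qt1 adjC st1.
have ws1 : last s1 w = s1 by rewrite last_rcons.
have uw : uniq w.
  rewrite /w -rot1_cons rot_uniq -cat_cons cat_uniq up uq andbT.
  by apply/hasPn => z zq; apply: contra (pS' z) (qC' z zq).
exists [set y in w], (walk_edges s1 w); split.
- exact: biconnected_cycle s1w ws1 uw.
- rewrite subUset !sub1set !inE /w !mem_rcons mem_head /= in_cons mem_cat qt1.
  by rewrite (mem_last t q) !orbT.
- exact: walk_edges_cut_even.
- apply: walk_edges_sub => //; first by rewrite inE mem_rcons mem_head.
  by move=> z; rewrite inE.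
move=> f fS; rewrite /w rcons_cat walk_edges_cat -ps /= -cats1 walk_edges_cat -qt1 /=.
rewrite !in_symdiff !in_set1 in_set0 addbF.
have fp : f \notin walk_edges s1 p.
  apply: contraTN fS => fp; apply: iedges_cut.
  exact: subsetP (walk_edges_sub s1p s1S pS) _ fp.
have fq : f \notin walk_edges t q.
  apply: contraTN fS => fq; rewrite -cutC; apply: iedges_cut.
  exact: subsetP (walk_edges_sub tq tC qC) _ fq.
by rewrite (negbTE fp) (negbTE fq) /= [[set t1; s1]]setUC addbC.
Qed.

Section CycleSpace.
Variables (B : {set V}) (T P : {set {set V}}) (D : {set V} -> {set {set V}}).
Hypothesis treeT : spanning_tree adj B T.
Hypothesis evenD : {in P, forall f, cut_even (D f)}.
Hypothesis subD : {in P, forall f, D f \subset iedges B}.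
Hypothesis memD : {in P &, forall e f, (e \in D f) = (e == f)}.

Definition cycle_sum (J : {set {set V}}) : {set {set V}} :=
  [set A | odd #|[set f | A \in D f] :&: J|].

Lemma mem_cycle_sum_big (J : {set {set V}}) A :
  (A \in cycle_sum J) = \big[addb/false]_(f in J) (A \in D f).
Proof. by rewrite inE odd_card_setI; apply: eq_bigr => f _; rewrite inE. Qed.

Lemma mem_cycle_sum (J : {set {set V}}) e :
  J \subset P -> e \in P -> (e \in cycle_sum J) = (e \in J).
Proof.
move=> sJP eP; rewrite mem_cycle_sum_big; case: (boolP (e \in J)) => eJ.
  rewrite (bigD1 e) //= memD // eqxx big1 // => f /andP[fJ fe].
  by rewrite (memD eP (subsetP sJP _ fJ)) eq_sym (negbTE fe).
rewrite big1 ?(negbTE eJ) // => f fJ.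
by rewrite (memD eP (subsetP sJP _ fJ)); apply: contraNF eJ => /eqP ->.
Qed.

Lemma cycle_sum_even (J : {set {set V}}) : J \subset P -> cut_even (cycle_sum J).
Proof.
move=> sJP U; rewrite odd_card_setI.
rewrite (eq_bigr (fun A => \big[addb/false]_(f in J) (A \in D f))); last first.
  by move=> A _; rewrite mem_cycle_sum_big.
rewrite exchange_big big1 // => f fJ; rewrite -odd_card_setI.
exact/negbTE/evenD/(subsetP sJP).
Qed.

Lemma cycle_sum_sub (J : {set {set V}}) : J \subset P -> cycle_sum J \subset iedges B.
Proof.
move=> sJP; apply/subsetP => A; rewrite inE => /odd_gt0.
rewrite card_gt0 => /set0Pn [f]; rewrite in_setI inE => /andP[Af fJ].
exact: subsetP (subD (subsetP sJP _ fJ)) _ Af.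
Qed.

Lemma cycle_sum_inj (J J' : {set {set V}}) : J \subset P -> J' \subset P ->
  cycle_sum J :&: (iedges B :\: T) = cycle_sum J' :&: (iedges B :\: T) -> J = J'.
Proof.
move=> sJP sJ'P eqN.
have sum0 : symdiff (cycle_sum J) (cycle_sum J') = set0.
  apply: (spanning_tree_cut_even treeT).
    2: exact: cut_even_symdiff (cycle_sum_even sJP) (cycle_sum_even sJ'P).
  apply/subsetP => A; apply: contraTT => AT; rewrite in_symdiff.
  have [AB|nAB] := boolP (A \in iedges B).
    have /setP/(_ A) := eqN; rewrite !in_setI in_setD AT AB /= !andbT => ->.
    by rewrite addbb.
  by rewrite (contraNF (subsetP (cycle_sum_sub sJP) A) nAB)
             (contraNF (subsetP (cycle_sum_sub sJ'P) A) nAB).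
apply/setP => e; case: (boolP (e \in P)) => eP; last first.
  by apply/idP/idP => [/(subsetP sJP)|/(subsetP sJ'P)]; rewrite (negbTE eP).
have /setP/(_ e) := sum0; rewrite in_symdiff !mem_cycle_sum // inE.
by case: (e \in J); case: (e \in J').
Qed.

Lemma card_le_nonforest : #|P| <= #|iedges B :\: T|.
Proof.
pose g J := cycle_sum J :&: (iedges B :\: T).
have ginj : {in powerset P &, injective g}.
  by move=> J J'; rewrite !powersetE; apply: cycle_sum_inj.
have : #|g @: powerset P| <= #|powerset (iedges B :\: T)|.
  by apply/subset_leq_card/subsetP => _ /imsetP[J _ ->]; rewrite powersetE subsetIr.
by rewrite card_in_imset // !card_powerset leq_exp2l.
Qed.

End CycleSpace.

Lemma bond_card_le k (S : {set V}) : almost_tree adj k -> bond S -> #|cut S| <= k.+1.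
Proof.
move=> [connG treeG] bS; have [/set0Pn [e1 e1S] _] := bS.
have cS := bond_connected_on connG bS.
have cC := bond_connected_on connG (bondC bS).
have /fin_all_exists [WD WDP] : forall f, exists WD : {set V} * {set {set V}},
    f \in cut S -> [/\ biconnected WD.1, e1 \subset WD.1, cut_even WD.2,
      WD.2 \subset iedges WD.1 &
      {in cut S, forall f', (f' \in WD.2) = (f' == e1) (+) (f' == f)}].
  move=> f; case: (boolP (f \in cut S)) => fS; last by exists (set0, set0).
  by have [W [D cycleWD]] := cycle_through cS cC e1S fS; exists (W, D).
pose P := cut S :\ e1; pose B0 := \bigcup_(f in P) (WD f).1.
have [s1 [t1 [_ _ st1 ee1]]] := cut_ends e1S.
have bB0 : biconnected B0.
  apply: (biconnected_bigcup (adj_neq st1)) => f /setD1P [_ fS].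
  by have [bW + _ _ _] := WDP f fS; rewrite ee1 subUset !sub1set bW.
have [B blockB sB0B] := maxset_exists bB0.
have [T [treeT nT]] := treeG B blockB.
suff : #|P| <= k by rewrite (cardsD1 e1 (cut S)) e1S.
apply: leq_trans nT; apply: (card_le_nonforest (D := fun f => (WD f).2) treeT).
- by move=> f /setD1P [_ fS]; case: (WDP f fS).
- move=> f fP; have /setD1P [_ fS] := fP; have [_ _ _ sD _] := WDP f fS.
  exact: subset_trans sD (iedgesS (subset_trans (bigcup_sup _ fP) sB0B)).
- move=> e f /setD1P [ee1' eS] /setD1P [_ fS].
  by have [_ _ _ _ ->] := WDP f fS; rewrite // (negbTE ee1').
Qed.

Section CutPolytope.
Variable R : realType.
Local Open Scope ring_scope.
Local Notation cutvec := (cutvec adj R).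

Lemma cutvec_in_CUT Z : in_CUT adj (cutvec Z).
Proof.
exists (fun S => if S == Z then 1 else 0); split; [|split].
- by move=> S; case: (S == Z).
- by rewrite -big_mkcond big_pred1_eq.
- move=> A _ /=; rewrite (bigD1 Z) //= eqxx mul1r big1 ?addr0 // => S /negbTE ->.
  by rewrite mul0r.
Qed.

(* The midpoint of [v(X), v(Y)] is also the midpoint of [v(X△Z), v(Y△Z)]; since it lies on
   the face, so do both of these cut vectors. *)
Lemma cut_adjacent_swap X Y Z : cut_adjacent adj R X Y ->
  cut Z \subset cut (symdiff X Y) -> in_segment adj X Y (cutvec (symdiff X Z)).
Proof.
move=> [_ [c [d [valid face]]]] sZ.
pose m A := (1 - 2^-1) * cutvec X A + 2^-1 * cutvec Y A.
have [_ dm] : in_CUT adj m /\ dotE adj c m = d.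
  apply/face; exists 2^-1; split => //; apply/andP; split; first by rewrite invr_ge0.
  by rewrite invf_le1 // ler1n.
have midE A : A \in edges ->
    cutvec X A + cutvec Y A = cutvec (symdiff X Z) A + cutvec (symdiff Y Z) A.
  move=> AE; have := subsetP sZ A; rewrite /cutvec !cut_symdiff //.
  by case: (A \in cut X); case: (A \in cut Y); case: (A \in cut Z) => //= h;
    rewrite ?addr0 ?add0r //; move/(_ isT): h.
have dmE : 2 * dotE adj c m =
    dotE adj c (cutvec (symdiff X Z)) + dotE adj c (cutvec (symdiff Y Z)).
  rewrite /dotE -big_split mulr_sumr; apply: eq_bigr => A AE /=.
  by rewrite -mulrDr -midE // /m; field.
have leX := valid _ (cutvec_in_CUT (symdiff X Z)).
have leY := valid _ (cutvec_in_CUT (symdiff Y Z)).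
apply/face; split; first exact: cutvec_in_CUT.
by rewrite dm in dmE; lra.
Qed.

Lemma cut_adjacent_bond X Y : cut_adjacent adj R X Y -> bond (symdiff X Y).
Proof.
move=> adjXY; split.
  case: adjXY => cXY _; apply: contra cXY => /eqP cXY0; apply/eqP/setP => A.
  case: (boolP (A \in edges)) => [AE|nAE]; last first.
    by apply/idP/idP => /cut_edges; rewrite (negbTE nAE).
  by have := cut_symdiff X Y AE; rewrite cXY0 inE; do 2!case: (_ \in cut _).
move=> Z sZ /set0Pn [A1 A1Z]; apply/eqP; rewrite eqEsubset sZ /=.
apply/subsetP => A2 A2S; apply: contraT => A2Z.
have [t [_ segm]] := cut_adjacent_swap adjXY sZ.
have A1S := subsetP sZ _ A1Z.
have A1E := cut_edges A1Z; have A2E := cut_edges A2S.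
have := segm _ A1E; have := segm _ A2E.
move: A1S A2S A1Z A2Z; rewrite /cutvec !cut_symdiff //.
by do 2!case: (_ \in cut X); do 2!case: (_ \in cut Y); do 2!case: (_ \in cut Z);
  move=> //= *; lra.
Qed.

End CutPolytope.

End Graph.

Theorem lemma2 (V : finType) (adj : rel V) (R : realType) (X Y : {set V}) :
  simple_graph adj -> almost_tree adj 2 ->
  cut_adjacent adj R X Y ->
  (#|cut adj (symdiff X Y)| <= 3)%N.
Proof.
move=> [adjC adj_irr] treeG adjXY.
exact: (bond_card_le adjC adj_irr treeG (cut_adjacent_bond adjC adj_irr adjXY)).
Qed.
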